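(* Let $X$ be an element of the tensor algebra over $\mathbb{R}^d$ with strictly positive radius of convergence $\rho(X)>0$, and suppose $\pi_n(X)\neq 0$ for some $n\ge 0$. Then for every integer $k\ge n+1$ there exists a linear map $M\in\mathcal{L}(\mathbb{R}^d;\mathfrak{t}(k,\mathbb{R}))$ such that the series defining $\Phi_X(M)$ converges and $\Phi_X(M)\neq 0$.
   Context: Elements of the tensor algebra are (formal) sequences $X=(\pi_0(X),\pi_1(X),\dots)$ with $\pi_n(X)\in(\mathbb{R}^d)^{\otimes n}$, $(\mathbb{R}^d)^{\otimes0}=\mathbb{R}$. $\mathbb{R}^d$ carries the $\ell_1$-norm and each $(\mathbb{R}^d)^{\otimes n}$ the projective tensor norm. The radius of convergence $\rho(X)$ is the radius of convergence of the complex power series $\lambda\mapsto\sum_{n\ge0}\|\pi_n(X)\|\lambda^n$. $\mathfrak{t}(k,\mathbb{R})$ is the space of real $k\times k$ matrices $M$ with $M+M^\top=0$ whose $(i,j)$-entry can be nonzero only if $|i-j|=1$ (tridiagonal antisymmetric matrices). For a linear map $M:\mathbb{R}^d\to\mathfrak{t}(k,\mathbb{R})\subset\mathfrak{gl}(k,\mathbb{C})$, $\widetilde M$ is the algebra homomorphism with $\widetilde M(1)=I_k$ and $\widetilde M(e_{i_1}\otimes\cdots\otimes e_{i_\ell})=M(e_{i_1})\cdots M(e_{i_\ell})$, and the generating function is $\Phi_X(M)=\sum_{n\ge0}\widetilde M(\pi_n(X))$ (Hilbert–Schmidt norm on matrices), defined when this series converges. *)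

From HB Require Import structures.
From mathcomp Require Import all_boot all_order all_algebra.
From mathcomp Require Import all_classical all_reals all_analysis.
Set Implicit Arguments. Unset Strict Implicit. Unset Printing Implicit Defensive.
Import Order.TTheory GRing.Theory Num.Theory.
Import numFieldNormedType.Exports.
Local Open Scope classical_set_scope.
Local Open Scope ring_scope.

(* (R^d)^{(x) n} is identified with functions on words of length n:
   x = \sum_w x w e_{w_0} (x) ... (x) e_{w_{n-1}}. *)
Definition tensor (R : realType) (d n : nat) := n.-tuple 'I_d -> R.

(* An element X of the tensor algebra: pi_n(X) = X n. *)
Definition tensor_seq (R : realType) (d : nat) := forall n : nat, tensor R d n.

Definition l1norm (R : realType) (d : nat) (u : 'I_d -> R) : R :=
  \sum_(i < d) `|u i|.

Definition elem_tensor (R : realType) (d n : nat) (c : R)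
  (v : 'I_n -> 'I_d -> R) : tensor R d n :=
  fun w => c * \prod_(l < n) v l (tnth w l).

Definition proj_norm (R : realType) (d n : nat) (x : tensor R d n) : R :=
  inf [set s : R | exists (m : nat) (c : 'I_m -> R)
         (v : 'I_m -> 'I_n -> 'I_d -> R),
         (forall w, x w = \sum_(j < m) elem_tensor (c j) (v j) w) /\
         s = \sum_(j < m) `|c j| * \prod_(l < n) l1norm (v j l)].

Definition conv_radius (R : realType) (d : nat) (X : tensor_seq R d) : \bar R :=
  ereal_sup [set r%:E | r in [set r : R | 0 <= r /\
     cvg ((series (fun n : nat => proj_norm (X n) * r ^+ n)) @ \oo)]].

Definition tridiag_antisym (R : realType) (k : nat) (A : 'M[R]_k) : Prop :=
  A + A^T = 0 /\ (forall i j : 'I_k, `|(i : int) - (j : int)| != 1%N -> A i j = 0).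

Definition basis_vec (R : realType) (d : nat) (i : 'I_d) : 'rV[R]_d :=
  delta_mx 0 i.

Definition Mtilde (R : realType) (d k n : nat)
  (M : 'rV[R]_d -> 'M[R]_k) (x : tensor R d n) : 'M[R]_k :=
  \sum_(w : n.-tuple 'I_d) x w *: \prod_(l < n) M (basis_vec R (tnth w l)).

Definition Phi_partial (R : realType) (d k : nat)
  (X : tensor_seq R d) (M : 'rV[R]_d -> 'M[R]_k) : nat -> 'M[R]_k :=
  series (fun n => Mtilde M (X n)).

(* Phi_X(M), meaningful when the series converges. *)
Definition Phi_X (R : realType) (d k : nat)
  (X : tensor_seq R d) (M : 'rV[R]_d -> 'M[R]_k) : 'M[R]_k :=
  lim (Phi_partial X M @ \oo).

From HB Require Import structures.
From mathcomp Require Import all_boot all_order all_algebra.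
From mathcomp Require Import all_classical all_reals all_analysis.
From mathcomp Require Import ring lra zify.
Set Implicit Arguments. Unset Strict Implicit. Unset Printing Implicit Defensive.
Import Order.TTheory GRing.Theory Num.Theory.
Import numFieldNormedType.Exports.
Local Open Scope classical_set_scope.
Local Open Scope ring_scope.

(* Let w be a word of length n with X_n(w) != 0 and take
   M(v) = c * sum_l v_(w_l) (E_(l,l+1) - E_(l+1,l)).  Every M(e_i) is
   tridiagonal, so the (0,n) entry of a product of m of them vanishes for
   m < n, while for m = n it is c^n times the indicator of the word w.  Hence
   the (0,n) entry of Phi_X(M) is a power series in c whose first nonzero
   coefficient is X_n(w).  Since |Mtilde(pi_m X)| <= (C c)^m ||pi_m X|| with C
   depending only on d, k and n, the series converges for small c > 0, and for
   c small enough its tail is dominated by the leading term c^n X_n(w). *)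

(* The library declares the complete and the normed structures on matrices
   separately; this makes 'M[R]_k a completeNormedModType. *)
HB.instance Definition _ (R : realType) (k : nat) :=
  Uniform_isComplete.Build 'M[R]_k (@mx_complete R k k).

Section DominatedPowerSeries.
Variable R : realType.

Lemma cvg_series_dominated (V : completeNormedModType R) (A : V ^nat)
    (u : R ^nat) (s c : R) :
  (forall m, `|A m| * s ^+ m <= u m) -> cvgn (series u) -> 0 <= c <= s ->
  cvgn (series (fun m => c ^+ m *: A m)).
Proof.
move=> A_dom u_cvg /andP[c_ge0 c_le_s]; apply: normed_cvg.
have s_ge0 : 0 <= s := le_trans c_ge0 c_le_s.
apply: (series_le_cvg _ _ _ u_cvg) => m /=.
- exact: normr_ge0.
- by apply: le_trans _ (A_dom m); rewrite mulr_ge0 ?exprn_ge0.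
- rewrite normrZ ger0_norm ?exprn_ge0 // mulrC; apply: le_trans _ (A_dom m).
  by rewrite ler_wpM2l // lerXn2r.
Qed.

Variables (a u : R ^nat) (s : R) (n : nat).
Hypotheses (s_gt0 : 0 < s) (a_dom : forall m, `|a m| * s ^+ m <= u m).
Hypotheses (u_cvg : cvgn (series u)) (a_lt : forall m, (m < n)%N -> a m = 0).

Let s_ge0 : 0 <= s. Proof. exact: ltW. Qed.

Let u_ge0 m : 0 <= u m.
Proof. by apply: le_trans _ (a_dom m); rewrite mulr_ge0 ?exprn_ge0. Qed.

Let series_le_lim N : series u N <= limn (series u).
Proof.
have := nondecreasing_cvgn_le _ u_cvg N; apply.
by apply: nondecreasing_series => m _ _; exact: u_ge0.
Qed.

Lemma power_series_tail_le (rho : R) N : 0 <= rho <= 1 -> (n < N)%N ->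
  `|series (fun m => (rho * s) ^+ m * a m) N - (rho * s) ^+ n * a n|
    <= rho ^+ n.+1 * limn (series u).
Proof.
move=> /andP[rho_ge0 rho_le1] nN; rewrite /series /=.
rewrite (big_cat_nat (leq0n n) (ltnW nN)) /= big_nat_cond big1; last first.
  by move=> m /andP[/andP[_ mn] _]; rewrite a_lt ?mulr0.
rewrite add0r big_ltn // addrC addrK.
apply: le_trans (ler_norm_sum _ _ _) _.
apply: le_trans (_ : \sum_(n.+1 <= m < N) rho ^+ n.+1 * u m <= _).
  apply: ler_sum_nat => m /andP[nm _].
  rewrite normrM exprMn normrM [`|rho ^+ m|]ger0_norm ?exprn_ge0 //.
  rewrite [`|s ^+ m|]ger0_norm ?exprn_ge0 // -mulrA.
  apply: ler_pM; rewrite ?mulr_ge0 ?exprn_ge0 ?ler_wiXn2l //.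
  by rewrite mulrC a_dom.
rewrite -mulr_sumr ler_wpM2l ?exprn_ge0 //; apply: le_trans (series_le_lim N).
rewrite /series /= (big_cat_nat (leq0n n.+1) nN) /= lerDr.
by apply: sumr_ge0 => m _.
Qed.

Lemma power_series_neq0 : a n != 0 -> exists2 c, 0 < c <= s &
  forall L, series (fun m => c ^+ m * a m) @ \oo --> L -> L != 0.
Proof.
move=> an_neq0; set S := limn (series u); set Q := s ^+ n * `|a n|.
have S_ge0 : 0 <= S.
  by apply: le_trans (series_le_lim 0); rewrite /series /= big_geq.
have Q_gt0 : 0 < Q by rewrite mulr_gt0 ?exprn_gt0 ?normr_gt0.
set rho := Q / (Q + S + 1).
have rhoE : rho * (Q + S + 1) = Q by rewrite divfK // gt_eqF //; lra.
have rho_gt0 : 0 < rho by rewrite divr_gt0 //; lra.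
have rho_le1 : rho <= 1 by nra.
have rhoS_lt : rho * S < Q by nra.
exists (rho * s); first by rewrite mulr_gt0 //= ger_pMl.
move=> L cvL; apply/eqP => L0.
have : `|(rho * s) ^+ n * a n| <= rho ^+ n.+1 * S.
  have cv_dist : (fun N => `|series (fun m => (rho * s) ^+ m * a m) N
      - (rho * s) ^+ n * a n|) @ \oo --> `|L - (rho * s) ^+ n * a n|.
    by apply: cvg_norm; apply: cvgB => //; exact: cvg_cst.
  rewrite L0 sub0r normrN in cv_dist; apply: (cvgr_to_le cv_dist).
  near=> N; apply: power_series_tail_le; first by rewrite ltW.
  by near: N; exact: nbhs_infty_gt.
have cn_ge0 : 0 <= (rho * s) ^+ n by rewrite exprn_ge0 // mulr_ge0 // ltW.
rewrite normrM (ger0_norm cn_ge0) exprMn -mulrA.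
by rewrite exprSr -mulrA ler_pM2l ?exprn_gt0 // leNgt rhoS_lt.
Unshelve. all: by end_near.
Qed.

End DominatedPowerSeries.

Lemma conv_radius_gt0_cvg (R : realType) (d : nat) (X : tensor_seq R d) :
  (0 < conv_radius X)%E ->
  exists2 r : R, 0 < r & cvgn (series (fun m => proj_norm (X m) * r ^+ m)).
Proof.
by case/ereal_sup_gt => _ [r [_ u_cvg] <-]; rewrite lte_fin => r_gt0; exists r.
Qed.

Lemma prod_tnth_eq (R : realType) (T : eqType) (m : nat) (w w' : m.-tuple T) :
  \prod_(l < m) ((tnth w l == tnth w' l)%:R : R) = (w == w')%:R.
Proof.
have [<-|neq_ww'] := eqVneq w w'; first by rewrite big1 // => l _; rewrite eqxx.
have [l neq_l] : exists l, tnth w l != tnth w' l.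
  apply/existsP; apply: contraR neq_ww' => /existsPn eq_ww'.
  by apply/eqP/eq_from_tnth => l; apply/eqP/negPn/eq_ww'.
by rewrite (bigD1 l) //= (negbTE neq_l) mul0r.
Qed.

Section ProjectiveNorm.
Variables (R : realType) (d m : nat) (x : tensor R d m).

Lemma lb_le_proj_norm (y : R) :
  (forall p (c : 'I_p -> R) (v : 'I_p -> 'I_m -> 'I_d -> R),
    (forall w, x w = \sum_(j < p) elem_tensor (c j) (v j) w) ->
    y <= \sum_(j < p) `|c j| * \prod_(l < m) l1norm (v j l)) ->
  y <= proj_norm x.
Proof.
move=> lb; apply: lb_le_inf => [|_ [p [c [v [xE ->]]]]]; last exact: lb.
(* nonempty: x = sum_w x(w) e_(w_0) (x) ... (x) e_(w_(m-1)) over all words w *)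
eexists; exists #|{: m.-tuple 'I_d}|, (fun j => x (enum_val j)),
  (fun j l i => (i == tnth (enum_val j) l)%:R); split=> // w.
rewrite -(big_enum_val (fun u : m.-tuple 'I_d =>
  elem_tensor (x u) (fun l i => (i == tnth u l)%:R) w)) /= (bigD1 w) //=.
rewrite /elem_tensor prod_tnth_eq eqxx mulr1 big1 ?addr0 // => u /negbTE neq_uw.
by rewrite prod_tnth_eq eq_sym neq_uw mulr0.
Qed.

Lemma proj_norm_ge0 : 0 <= proj_norm x.
Proof.
apply: lb_le_proj_norm => p c v _; apply: sumr_ge0 => j _.
by rewrite mulr_ge0 // prodr_ge0 // => l _; rewrite sumr_ge0.
Qed.

Lemma norm_coef_le_proj_norm w : `|x w| <= proj_norm x.
Proof.
apply: lb_le_proj_norm => p c v ->; apply: le_trans (ler_norm_sum _ _ _) _.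
apply: ler_sum => j _; rewrite normrM normr_prod ler_wpM2l //.
apply: ler_prod => l _; rewrite normr_ge0 /l1norm (bigD1 (tnth w l)) //=.
by rewrite lerDl sumr_ge0.
Qed.

End ProjectiveNorm.

Section MatrixNorm.
Variables (R : realType) (p q : nat).
Implicit Type A : 'M[R]_(p, q).

Lemma mx_entry_le_norm A i j : `|A i j| <= `|A|.
Proof.
by rewrite [leRHS]/Num.norm /= mx_normrE; apply/bigmax_geP; right; exists (i, j).
Qed.

Lemma mx_norm_le A b : 0 <= b -> (forall i j, `|A i j| <= b) -> `|A| <= b.
Proof.
move=> b_ge0 Ab; rewrite [leLHS]/Num.norm /= mx_normrE.
by apply/bigmax_leP; split=> // -[i j].
Qed.

Lemma cvg_mx_entry (T : Type) (F : set_system T) {FF : Filter F}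
    (f : T -> 'M[R]_(p, q)) (L : 'M[R]_(p, q)) i j :
  f @ F --> L -> (fun t => f t i j) @ F --> L i j.
Proof.
move=> /cvgrPdist_le fL; apply/cvgrPdist_le => e e_gt0.
apply: filterS (fL e e_gt0) => t /=; apply: le_trans.
by have := mx_entry_le_norm (L - f t) i j; rewrite !mxE.
Qed.

End MatrixNorm.

Section BandMatrices.
Variables (R : realType) (k : nat).

Definition mx_band (m : nat) (A : 'M[R]_k) :=
  forall i j : 'I_k, (i + m < j)%N || (j + m < i)%N -> A i j = 0.

Lemma tridiag_antisym_band (A : 'M[R]_k) : tridiag_antisym A -> mx_band 1 A.
Proof. by move=> [_ A0] i j ij; apply: A0; move: ij; lia. Qed.

Lemma mx_band_mul m (A B : 'M[R]_k) :
  mx_band m A -> mx_band 1 B -> mx_band m.+1 (A * B).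
Proof.
move=> Am B1 i j ij; rewrite -mulmxE mxE big1 // => l _.
have [il|il] := boolP ((i + m < l)%N || (l + m < i)%N).
  by rewrite Am // mul0r.
by rewrite B1 ?mulr0 //; move: ij il; lia.
Qed.

Lemma mx_band_prod m (N : 'I_m -> 'M[R]_k) :
  (forall l, mx_band 1 (N l)) -> mx_band m (\prod_(l < m) N l).
Proof.
elim: m N => [|m IH] N N1.
  move=> i j; rewrite big_ord0 -idmxE mxE.
  by case: eqP => // ->; rewrite !addn0 ltnn.
by rewrite big_ord_recr; apply: mx_band_mul => //; apply: IH.
Qed.

Lemma mx_prod_entry_le m (N : 'I_m -> 'M[R]_k) (b : R) : 0 <= b ->
  (forall l i j, `|N l i j| <= b) ->
  forall i j, `|(\prod_(l < m) N l) i j| <= (k%:R * b) ^+ m.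
Proof.
elim: m N => [|m IH] N b_ge0 Nb i j.
  by rewrite big_ord0 -idmxE mxE expr0; case: eqP; rewrite ?normr1 ?normr0.
rewrite big_ord_recr /= -mulmxE mxE exprSr.
apply: le_trans (ler_norm_sum _ _ _) _.
apply: le_trans (_ : \sum_(l < k) (k%:R * b) ^+ m * b <= _).
  by apply: ler_sum => l _; rewrite normrM ler_pM ?IH.
by rewrite sumr_const card_ord -mulrnAr -[b *+ k]mulr_natl.
Qed.

End BandMatrices.

Lemma mx_band_prod_superdiag (R : realType) (k m : nat)
    (N : 'I_m -> 'M[R]_k.+1) :
  (forall l, mx_band 1 (N l)) -> (m <= k)%N ->
  (\prod_(l < m) N l) ord0 (inord m) = \prod_(l < m) N l (inord l) (inord l.+1).
Proof.
elim: m N => [|m IH] N N1 mk.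
  by rewrite !big_ord0 -idmxE mxE -val_eqE /= inordK.
rewrite !big_ord_recr /= -IH ?(ltnW mk) // -mulmxE mxE (bigD1 (inord m)) //=.
rewrite big1 ?addr0 // => j neq_jm.
have m_lt : (m < k.+1)%N by lia.
have {}neq_jm : (j : nat) != m.
  by apply: contra neq_jm => /eqP eq_jm; apply/eqP/val_inj; rewrite /= inordK.
have [j_lt_m|m_lt_j|eq_jm] := ltngtP j m; last by rewrite eq_jm eqxx in neq_jm.
  by rewrite (N1 ord_max) ?mulr0 // inordK //; apply/orP; left; lia.
rewrite (mx_band_prod (fun l => N1 (widen_ord _ l))) ?mul0r //.
by apply/orP; left.
Qed.

Lemma basis_vec_entry (R : realType) (d : nat) (e i : 'I_d) :
  basis_vec R e 0 i = (i == e)%:R.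
Proof. by rewrite mxE eqxx. Qed.

Section TridiagonalPath.
Variables (R : realType) (d k n : nat) (ws : n.-tuple 'I_d).

Definition step_mx (l : nat) : 'M[R]_k :=
  \matrix_(i, j) (((i == l :> nat) && (j == l.+1 :> nat))%:R
                 - ((i == l.+1 :> nat) && (j == l :> nat))%:R).

Definition path_mx (c : R) (v : 'rV[R]_d) : 'M[R]_k :=
  \sum_(l < n) (c * v 0 (tnth ws l)) *: step_mx l.

Lemma path_mx_is_linear c : linear (path_mx c).
Proof.
move=> a u v; rewrite /path_mx scaler_sumr -big_split; apply: eq_bigr => l _ /=.
by rewrite !mxE scalerA -scalerDl; congr (_ *: _); ring.
Qed.

Lemma path_mx_tridiag c v : tridiag_antisym (path_mx c v).
Proof.
split.
  apply/matrixP => i j; rewrite !mxE /path_mx !summxE -big_split big1 // => l _.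
  rewrite !mxE /= (andbC (j == l :> nat)) (andbC (j == l.+1 :> nat)).
  by rewrite -mulrDr -opprB addNr mulr0.
move=> i j ij; rewrite /path_mx summxE big1 // => l _; rewrite !mxE.
case E1: (_ && _); case E2: (_ && _); rewrite ?subrr ?mulr0 //.
all: by exfalso; move: ij E1 E2; lia.
Qed.

Lemma path_mxZ c v : path_mx c v = c *: path_mx 1 v.
Proof.
by rewrite /path_mx scaler_sumr; apply: eq_bigr => l _; rewrite scalerA mul1r.
Qed.

Lemma path_mx_superdiag c v (l : 'I_n) (i j : 'I_k) :
  i = l :> nat -> j = l.+1 :> nat -> path_mx c v i j = c * v 0 (tnth ws l).
Proof.
move=> il jl; rewrite /path_mx summxE (bigD1 l) //= big1 ?addr0.
  by rewrite !mxE il jl !eqxx (ltn_eqF (ltnSn l)) subr0 mulr1.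
move=> l' neq_l'l; have {}neq_l'l : (l' : nat) != l := neq_l'l.
rewrite !mxE il jl.
case E1: (_ && _); case E2: (_ && _); rewrite ?subrr ?mulr0 //.
all: by exfalso; move: neq_l'l E1 E2; lia.
Qed.

Lemma path_mx_basis_entry_le e i j : `|path_mx 1 (basis_vec R e) i j| <= n%:R.
Proof.
rewrite summxE; apply: le_trans (ler_norm_sum _ _ _) _.
apply: le_trans (_ : \sum_(l < n) (1 : R) <= _).
  apply: ler_sum => l _; rewrite basis_vec_entry !mxE mul1r normrM.
  apply: mulr_ile1 => //; first by case: eqP; rewrite ?normr1 ?normr0.
  by case: (_ && _); case: (_ && _);
    rewrite ?subrr ?normr0 ?subr0 ?sub0r ?normrN ?normr1.
by rewrite sumr_const card_ord.
Qed.

End TridiagonalPath.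

HB.instance Definition _ (R : realType) (d k n : nat) (ws : n.-tuple 'I_d)
    (c : R) :=
  GRing.isLinear.Build R 'rV[R]_d 'M[R]_k _ (path_mx k ws c)
    (path_mx_is_linear k ws c).

Section GeneratingTerms.
Variables (R : realType) (d k : nat).
Implicit Type M : 'rV[R]_d -> 'M[R]_k.

Lemma Mtilde_entry M m (x : tensor R d m) i j :
  Mtilde M x i j =
  \sum_(w : m.-tuple 'I_d) x w * (\prod_(l < m) M (basis_vec R (tnth w l))) i j.
Proof. by rewrite /Mtilde summxE; apply: eq_bigr => w _; rewrite mxE. Qed.

Lemma Mtilde_band M m (x : tensor R d m) :
  (forall e, mx_band 1 (M (basis_vec R e))) -> mx_band m (Mtilde M x).
Proof.
move=> M1 i j ij; rewrite Mtilde_entry big1 // => w _.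
by rewrite mx_band_prod ?mulr0.
Qed.

Lemma Mtilde_entry_le M m (x : tensor R d m) (b : R) : 0 <= b ->
  (forall e i j, `|M (basis_vec R e) i j| <= b) ->
  forall i j, `|Mtilde M x i j| <= (d%:R * (k%:R * b)) ^+ m * proj_norm x.
Proof.
move=> b_ge0 Mb i j; rewrite Mtilde_entry; apply: le_trans (ler_norm_sum _ _ _) _.
apply: le_trans (_ : \sum_(w : m.-tuple 'I_d) proj_norm x * (k%:R * b) ^+ m <= _).
  apply: ler_sum => w _; rewrite normrM ler_pM ?norm_coef_le_proj_norm //.
  exact: mx_prod_entry_le.
rewrite sumr_const card_tuple card_ord -mulrnAr -[(_ ^+ m) *+ _]mulr_natl.
by rewrite natrX -exprMn mulrC.
Qed.

End GeneratingTerms.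

Lemma MtildeZ (R : realType) (d k m : nat) (M M' : 'rV[R]_d -> 'M[R]_k.+1)
    (c : R) (x : tensor R d m) :
  (forall v, M' v = c *: M v) -> Mtilde M' x = c ^+ m *: Mtilde M x.
Proof.
move=> M'E; rewrite /Mtilde scaler_sumr; apply: eq_bigr => w _.
under eq_bigr do rewrite M'E.
by rewrite scaler_prod prodr_const card_ord !scalerA mulrC.
Qed.

Lemma Mtilde_path_mx_corner (R : realType) (d k n : nat) (ws : n.-tuple 'I_d)
    (c : R) (x : tensor R d n) : (n <= k)%N ->
  Mtilde (path_mx k.+1 ws c) x ord0 (inord n) = c ^+ n * x ws.
Proof.
move=> nk.
have corner w : (\prod_(l < n) path_mx k.+1 ws c (basis_vec R (tnth w l)))
    ord0 (inord n) = c ^+ n * (ws == w)%:R.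
  rewrite mx_band_prod_superdiag //; last first.
    by move=> l; apply/tridiag_antisym_band/path_mx_tridiag.
  rewrite (eq_bigr (fun l => c * (tnth ws l == tnth w l)%:R)) => [|l _].
    by rewrite big_split prodr_const card_ord prod_tnth_eq.
  have l_lt := ltn_ord l.
  by rewrite (path_mx_superdiag _ _ _ (inordK _) (inordK _))
    ?basis_vec_entry //; lia.
rewrite Mtilde_entry (bigD1 ws) //= corner eqxx mulr1 big1 ?addr0 1?mulrC //.
by move=> w neq_w; rewrite corner eq_sym (negbTE neq_w) !mulr0.
Qed.

Lemma Mtilde_path_mx_lt (R : realType) (d k n m : nat) (ws : n.-tuple 'I_d)
    (c : R) (x : tensor R d m) : (n <= k)%N -> (m < n)%N ->
  Mtilde (path_mx k.+1 ws c) x ord0 (inord n) = 0.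
Proof.
move=> nk mn; apply: Mtilde_band => [e|]; last by rewrite inordK //= mn.
exact/tridiag_antisym_band/path_mx_tridiag.
Qed.

Lemma Mtilde_path_mx_dominated (R : realType) (d k n : nat) (ws : n.-tuple 'I_d)
    (X : tensor_seq R d) (r : R) : 0 < r -> exists2 s : R, 0 < s &
  forall m, `|Mtilde (path_mx k ws 1) (X m)| * s ^+ m <= proj_norm (X m) * r ^+ m.
Proof.
move=> r_gt0; set K : R := d%:R * (k%:R * n%:R).
have K_ge0 : 0 <= K by rewrite !mulr_ge0 ?ler0n.
have s_gt0 : 0 < r / (K + 1) by rewrite divr_gt0 // ltr_wpDl.
have Ks_le : K * (r / (K + 1)) <= r.
  by rewrite mulrA ler_pdivrMr ?ltr_wpDl //; nra.
have Ks_ge0 : 0 <= K * (r / (K + 1)) by rewrite mulr_ge0 // ltW.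
exists (r / (K + 1)) => // m.
have A_le : `|Mtilde (path_mx k ws 1) (X m)| <= K ^+ m * proj_norm (X m).
  apply: mx_norm_le; first by rewrite mulr_ge0 ?exprn_ge0 ?proj_norm_ge0.
  exact: Mtilde_entry_le (ler0n _ _) (path_mx_basis_entry_le _ _).
apply: le_trans (ler_wpM2r (exprn_ge0 _ (ltW s_gt0)) A_le) _.
rewrite mulrAC -exprMn mulrC ler_wpM2l ?proj_norm_ge0 //.
by apply: lerXn2r; rewrite // nnegrE ltW.
Qed.

Lemma Phi_partial_path_mx (R : realType) (d k n : nat) (ws : n.-tuple 'I_d)
    (X : tensor_seq R d) (c : R) :
  Phi_partial X (path_mx k.+1 ws c) =
  series (fun m => c ^+ m *: Mtilde (path_mx k.+1 ws 1) (X m)).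
Proof.
by apply/funext => N; apply: eq_bigr => m _; apply: MtildeZ => v; exact: path_mxZ.
Qed.

Theorem corollary1p9 (R : realType) (d : nat) (X : tensor_seq R d) (n : nat) :
  (0 < conv_radius X)%E ->
  (exists w : n.-tuple 'I_d, X n w != 0) ->
  forall k : nat, (n.+1 <= k)%N ->
  exists M : {linear 'rV[R]_d -> 'M[R]_k},
    (forall v, tridiag_antisym (M v)) /\
    cvg (Phi_partial X M @ \oo) /\
    Phi_X X M != 0.
Proof.
move=> /conv_radius_gt0_cvg[r r_gt0 u_cvg] [ws Xws_neq0] [//|k] nk.
have [s s_gt0 A_dom] := Mtilde_path_mx_dominated k.+1 ws X r_gt0.
pose a m : R := Mtilde (path_mx k.+1 ws 1) (X m) ord0 (inord n).
have a_dom m : `|a m| * s ^+ m <= proj_norm (X m) * r ^+ m.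
  apply: le_trans (A_dom m); rewrite ler_wpM2r ?exprn_ge0 ?(ltW s_gt0) //.
  exact: mx_entry_le_norm.
have a_lt m : (m < n)%N -> a m = 0 by exact: Mtilde_path_mx_lt.
have an_neq0 : a n != 0 by rewrite /a Mtilde_path_mx_corner // expr1n mul1r.
have [c /andP[c_gt0 c_le_s] sum_neq0] :=
  power_series_neq0 s_gt0 a_dom u_cvg a_lt an_neq0.
have Phi_cvg : cvgn (Phi_partial X (path_mx k.+1 ws c)).
  rewrite Phi_partial_path_mx; apply: cvg_series_dominated A_dom u_cvg _.
  by rewrite (ltW c_gt0) c_le_s.
exists (GRing.Linear.clone _ _ _ _ (path_mx k.+1 ws c) _).
split; [exact: path_mx_tridiag | split=> //; apply/eqP => Phi0].
have entry_cvg : series (fun m => c ^+ m * a m) @ \oo -->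
    Phi_X X (path_mx k.+1 ws c) ord0 (inord n).
  have -> : series (fun m => c ^+ m * a m) =
      (fun N => Phi_partial X (path_mx k.+1 ws c) N ord0 (inord n)).
    apply/funext => N; rewrite Phi_partial_path_mx /series /= summxE.
    by apply: eq_bigr => m _; rewrite mxE.
  exact: cvg_mx_entry.
by move/sum_neq0: entry_cvg; rewrite Phi0 mxE eqxx.
Qed.
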